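(* Let $\lambda_1,\lambda_2\in P^+$. Then $a^{\lambda_1+\lambda_2}_{\lambda_1,\lambda_2}=1$, and $a^{\tau}_{\lambda_1,\lambda_2}=0$ for every $\tau\in P^+$ with $\tau\not\le\lambda_1+\lambda_2$.
   Context: Let $\mathfrak{sl}_n=\mathfrak n^+\oplus\mathfrak h\oplus\mathfrak n^-$ with simple roots $\alpha_1,\dots,\alpha_{n-1}$, $R^+$ the positive roots, $P^+$ the dominant integral weights, $V(\tau)$ the simple module of highest weight $\tau$; for $\alpha\in R^+$ fix an $\mathfrak{sl}_2$-triple $e_\alpha,f_\alpha,h_\alpha$ with $f_\alpha\in\mathfrak g_{-\alpha}$. The partial order is $\tau\le\mu$ iff $\mu-\tau\in\sum_i\mathbb Z_{\ge0}\alpha_i$. The current algebra $\mathfrak{sl}_n\otimes\mathbb C[t]$ has bracket $[x\otimes p,y\otimes q]=[x,y]\otimes pq$. For $\lambda_1,\lambda_2\in P^+$ with $\lambda=\lambda_1+\lambda_2$, $F_{\lambda_1,\lambda_2}$ is the $\mathfrak{sl}_n\otimes\mathbb C[t]$-module generated by $\mathbb 1$ subject to $(\mathfrak n^+\otimes\mathbb C[t]).\mathbb 1=0$, $(\mathfrak h\otimes t\mathbb C[t]).\mathbb 1=0$, $(\mathfrak n^-\otimes t^2\mathbb C[t]).\mathbb 1=0$, $(h\otimes1).\mathbb 1=\lambda(h)\mathbb 1$ ($h\in\mathfrak h$), and for all $\alpha\in R^+$: $(f_\alpha\otimes1)^{\lambda(h_\alpha)+1}.\mathbb 1=0$, $(f_\alpha\otimes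 t)^{\min\{\lambda_1(h_\alpha),\lambda_2(h_\alpha)\}+1}.\mathbb 1=0$. It is a finite-dimensional $\mathfrak{sl}_n$-module and $a^\tau_{\lambda_1,\lambda_2}:=\dim\operatorname{Hom}_{\mathfrak{sl}_n}(F_{\lambda_1,\lambda_2},V(\tau))$. *)

From HB Require Import structures.
From mathcomp Require Import all_boot all_order all_algebra.
Set Implicit Arguments. Unset Strict Implicit. Unset Printing Implicit Defensive.
Import Order.TTheory GRing.Theory Num.Theory.
Local Open Scope ring_scope.

(* Conventions.  sl_n = trace-zero n x n matrices over K (an algebraically
   closed field of characteristic 0, e.g. C).  The current algebra
   sl_n (x) K[t] is identified with trace-zero n x n matrices over {poly K}
   (x (x) p  <->  p *: map_mx polyC x); its bracket is the commutator.
   Positive roots: alpha = eps_i - eps_j, i < j;  e_alpha = E_ij,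
   f_alpha = E_ji, h_alpha = E_ii - E_jj.  Simple roots: j = i+1.
   Cartan subalgebra h = trace-zero diagonal matrices. *)

Section Defs.
Variable K : numClosedFieldType.
Variable n : nat.

Definition strict_upper (R : pzRingType) (X : 'M[R]_n) : Prop :=
  forall i j : 'I_n, ~~ (i < j)%N -> X i j = 0.
Definition strict_lower (R : pzRingType) (X : 'M[R]_n) : Prop :=
  forall i j : 'I_n, ~~ (j < i)%N -> X i j = 0.
Definition diagonal (R : pzRingType) (X : 'M[R]_n) : Prop :=
  forall i j : 'I_n, i != j -> X i j = 0.

Definition cartan (h : 'M[K]_n) : Prop := diagonal h /\ \tr h = 0.

(* A dominant integral weight is represented by mu : 'I_n -> nat,
   nonincreasing; it is the functional h |-> sum_i mu_i h_ii on the Cartan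
   subalgebra, so that lambda(h_alpha) = mu_i - mu_j for alpha = eps_i-eps_j.
   Every element of P^+ arises this way. *)
Definition dominant (mu : 'I_n -> nat) : Prop :=
  forall i j : 'I_n, (i <= j)%N -> (mu j <= mu i)%N.

Definition wt_ev (mu : 'I_n -> nat) (h : 'M[K]_n) : K :=
  \sum_(i < n) (mu i)%:R * h i i.

Definition wt_add (mu1 mu2 : 'I_n -> nat) : 'I_n -> nat :=
  fun i => (mu1 i + mu2 i)%N.

(* tau <= mu  iff  mu - tau is a Z_{>=0}-combination of the simple roots
   alpha_i (h) = h_ii - h_(i+1)(i+1), as functionals on the Cartan. *)
Definition wt_le (tau mu : 'I_n -> nat) : Prop :=
  exists k : 'I_n -> nat, forall h : 'M[K]_n, cartan h ->
    wt_ev mu h - wt_ev tau h =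
    \sum_(i < n) \sum_(j < n | j == i.+1 :> nat) (k i)%:R * (h i i - h j j).

Definition coroot_val (mu : 'I_n -> nat) (i j : 'I_n) : nat := (mu i - mu j)%N.

Definition sl_rep (V : vectType K) (sigma : 'M[K]_n -> 'End(V)) : Prop :=
  (forall (a : K) x y, sigma (a *: x + y) = a *: sigma x + sigma y) /\
  (forall x y, \tr x = 0 -> \tr y = 0 -> forall u,
     sigma (x *m y - y *m x) u = sigma x (sigma y u) - sigma y (sigma x u)).

Definition cur_rep (M : vectType K) (rho : 'M[{poly K}]_n -> 'End(M)) : Prop :=
  (forall (a : K) X Y, rho (a%:P *: X + Y) = a *: rho X + rho Y) /\
  (forall X Y, \tr X = 0 -> \tr Y = 0 -> forall u,
     rho (X *m Y - Y *m X) u = rho X (rho Y u) - rho Y (rho X u)).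

Definition F_rel (mu1 mu2 : 'I_n -> nat) (M : vectType K)
    (rho : 'M[{poly K}]_n -> 'End(M)) (v : M) : Prop :=
  let mu := wt_add mu1 mu2 in
  (* (n^+ (x) K[t]) . v = 0 *)
  (forall X : 'M[{poly K}]_n, strict_upper X -> rho X v = 0) /\
  (* (h (x) t K[t]) . v = 0 *)
  (forall X : 'M[{poly K}]_n, diagonal X -> \tr X = 0 ->
     (forall i : 'I_n, (X i i)`_0 = 0) -> rho X v = 0) /\
  (* (n^- (x) t^2 K[t]) . v = 0 *)
  (forall X : 'M[{poly K}]_n, strict_lower X ->
     (forall (i j : 'I_n) (k : nat), (k < 2)%N -> (X i j)`_k = 0) ->
     rho X v = 0) /\
  (* (h (x) 1) . v = lambda(h) v *)
  (forall h : 'M[K]_n, cartan h -> rho (map_mx polyC h) v = wt_ev mu h *: v) /\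
  (* (f_alpha (x) 1)^(lambda(h_alpha)+1) . v = 0 *)
  (forall i j : 'I_n, (i < j)%N ->
     iter (coroot_val mu i j).+1 (rho (delta_mx j i)) v = 0) /\
  (* (f_alpha (x) t)^(min(lambda1(h_alpha),lambda2(h_alpha))+1) . v = 0 *)
  (forall i j : 'I_n, (i < j)%N ->
     iter (minn (coroot_val mu1 i j) (coroot_val mu2 i j)).+1
          (rho ('X *: delta_mx j i)) v = 0).

(* (M, rho, v) is (a copy of) F_{lambda1,lambda2}: M is a finite-dimensional
   module over the current algebra, generated by v, v satisfies the defining
   relations, and (M, v) is universal among finite-dimensional modules with a
   vector satisfying the relations.  Since F_{lambda1,lambda2} is
   finite-dimensional, this characterises it up to isomorphism. *)
Definition is_F (mu1 mu2 : 'I_n -> nat) (M : vectType K)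
    (rho : 'M[{poly K}]_n -> 'End(M)) (v : M) : Prop :=
  cur_rep rho /\ F_rel mu1 mu2 rho v /\
  (forall U : {vspace M}, v \in U ->
     (forall X, \tr X = 0 -> forall u, u \in U -> rho X u \in U) ->
     U = fullv) /\
  (forall (N : vectType K) (rhoN : 'M[{poly K}]_n -> 'End(N)) (w : N),
     cur_rep rhoN -> F_rel mu1 mu2 rhoN w ->
     exists f : 'Hom(M, N), f v = w /\
       forall X, \tr X = 0 -> forall u, f (rho X u) = rhoN X (f u)).

Definition simple_hw (tau : 'I_n -> nat) (V : vectType K)
    (sigma : 'M[K]_n -> 'End(V)) : Prop :=
  sl_rep sigma /\ (fullv : {vspace V}) != 0%VS /\
  (forall U : {vspace V},
     (forall x, \tr x = 0 -> forall u, u \in U -> sigma x u \in U) ->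
     U = 0%VS \/ U = fullv) /\
  exists w : V, w != 0 /\
    (forall x : 'M[K]_n, strict_upper x -> sigma x w = 0) /\
    (forall h : 'M[K]_n, cartan h -> sigma h w = wt_ev tau h *: w).

(* sl_n-module maps M -> V, M viewed as an sl_n-module by restriction to
   sl_n (x) 1. *)
Definition sl_hom (M V : vectType K) (rho : 'M[{poly K}]_n -> 'End(M))
    (sigma : 'M[K]_n -> 'End(V)) (f : 'Hom(M, V)) : Prop :=
  forall x : 'M[K]_n, \tr x = 0 -> forall u,
    f (rho (map_mx polyC x) u) = sigma x (f u).

Definition hom_dim_is (M V : vectType K) (rho : 'M[{poly K}]_n -> 'End(M))
    (sigma : 'M[K]_n -> 'End(V)) (d : nat) : Prop :=
  exists U : {vspace 'Hom(M, V)},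
    (forall f, f \in U <-> sl_hom rho sigma f) /\ \dim U = d.

End Defs.

From HB Require Import structures.
From mathcomp Require Import all_boot all_order all_algebra.
From mathcomp Require Import ring zify.
From Stdlib Require Import Classical.
Set Implicit Arguments. Unset Strict Implicit. Unset Printing Implicit Defensive.
Import Order.TTheory GRing.Theory Num.Theory.
Local Open Scope ring_scope.

(* Since [1] is killed by [n^+ (x) C[t]] and [h (x) tC[t]], the module [F] is spanned by the
   monomials [(f_a1 (x) p1) ... (f_ak (x) pk) . 1] with positive roots [a_i]; such a monomial
   is a weight vector of weight [lambda - a1 - ... - ak].  A nonzero sl_n-map [F -> V(tau)]
   is onto, so the highest weight vector of [V(tau)] is a sum of images of monomials; as
   weight vectors of distinct weights are independent, some monomial has weight [tau], i.e.
   [tau <= lambda].  For [tau = lambda], evaluation at [t = 0] makes [V(lambda)] a quotient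
   of [F] (the relation for [f_a (x) 1] is [sl_2]-theory), and a map is determined by the
   image of [1], which lies in the one-dimensional [lambda]-weight space of [V(lambda)]. *)

Section WeightVectors.
Variables (K : fieldType) (V : vectType K) (I : Type).
Variables (P : I -> Prop) (A : I -> 'End(V)).

Definition weight_vector (mu : I -> K) (u : V) := forall a, P a -> A a u = mu a *: u.

Lemma weight_vector0 mu : weight_vector mu 0.
Proof. by move=> a _; rewrite linear0 scaler0. Qed.

Lemma weight_vectorD mu u w :
  weight_vector mu u -> weight_vector mu w -> weight_vector mu (u + w).
Proof. by move=> u_wt w_wt a Pa; rewrite linearD /= u_wt // w_wt // scalerDr. Qed.

Lemma weight_vectorZ mu c u : weight_vector mu u -> weight_vector mu (c *: u).
Proof. by move=> u_wt a Pa; rewrite linearZ /= u_wt // !scalerA mulrC. Qed.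

Lemma weight_sum_eq0 (J : eqType) (tau : I -> K) (x : V) (r : seq J)
    (mu : J -> I -> K) (y : J -> V) :
  weight_vector tau x ->
  (forall j, j \in r -> weight_vector (mu j) (y j)) ->
  (forall j, j \in r -> y j != 0 -> exists2 a, P a & mu j a != tau a) ->
  x = \sum_(j <- r) y j -> x = 0.
Proof.
elim: r x y => [|j0 r IH] x y x_wt y_wt y_sep; first by rewrite big_nil.
have y_wt' j : j \in r -> weight_vector (mu j) (y j) by move=> jr; apply/y_wt/mem_behead.
have y_sep' j : j \in r -> y j != 0 -> exists2 a, P a & mu j a != tau a.
  by move=> jr; apply/y_sep/mem_behead.
rewrite big_cons; have [-> | /(y_sep _ (mem_head _ _)) [a Pa Ha]] := eqVneq (y j0) 0.
  by rewrite add0r; apply: IH.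
(* [A a - c] kills [y j0] and rescales every other weight vector. *)
pose c := mu j0 a; pose B := (A a - c *: \1)%VF.
have B_wt nu u : weight_vector nu u -> B u = (nu a - c) *: u.
  by move=> u_wt; rewrite add_lfunE opp_lfunE scale_lfunE id_lfunE u_wt // scalerBl.
move=> ex; have ex_shift : (tau a - c) *: x = \sum_(j <- r) (mu j a - c) *: y j.
  rewrite -(B_wt _ _ x_wt) ex linearD linear_sum /= (B_wt _ _ (y_wt _ (mem_head _ _))).
  by rewrite subrr scale0r add0r; apply: eq_big_seq => j jr; rewrite (B_wt _ _ (y_wt' _ jr)).
have /eqP : (tau a - c) *: x = 0.
  apply: (IH _ _ (weight_vectorZ _ x_wt) _ _ ex_shift) => j jr.
    exact/weight_vectorZ/y_wt'.
  by rewrite scaler_eq0 negb_or => /andP[_]; exact: y_sep'.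
by rewrite scaler_eq0 subr_eq0 eq_sym (negbTE Ha) => /eqP.
Qed.

Lemma weight_vectors_eq0 (x : nat -> V) (mu : nat -> I -> K) :
  (forall k, weight_vector (mu k) (x k)) ->
  (forall k l, k != l -> exists2 a, P a & mu k a != mu l a) ->
  exists k, x k = 0.
Proof.
move=> x_wt mu_sep; apply: NNPP => /not_ex_all_not x_neq0.
(* Otherwise [x 0, ..., x (dim V)] would be a free family. *)
pose D := \dim (fullv : {vspace V}).
pose X := [tuple x i | i < D.+1].
have XE (i : 'I_D.+1) : X`_i = x i by rewrite -tnth_nth tnth_mktuple.
suff /eqP freeX : free X.
  by have := dimvS (subvf <<X>>); rewrite freeX size_tuple ltnn.
apply/freeP => c Xc0 i0.
have e : c i0 *: x i0 + \sum_(i <- enum 'I_D.+1 | i != i0) c i *: x i = 0.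
  rewrite -[RHS]Xc0 (bigD1 i0) //= XE big_enum_cond.
  by congr (_ + _); apply: eq_bigr => i _; rewrite XE.
have : c i0 *: x i0 = \sum_(i <- enum 'I_D.+1 | i != i0) - (c i *: x i).
  by apply/eqP; rewrite sumrN -addr_eq0 e.
rewrite -big_filter => E.
have /eqP : c i0 *: x i0 = 0.
  apply: (weight_sum_eq0 (mu := fun i : 'I_D.+1 => mu i) (weight_vectorZ _ (x_wt i0)) _ _ E).
    by move=> i _; rewrite -scaleNr; apply/weight_vectorZ/x_wt.
  move=> i; rewrite mem_filter => /andP[ii0 _] _.
  by have [a Pa Ha] := mu_sep _ _ (ii0 : val i != val i0); exists a.
by rewrite scaler_eq0 => /orP[/eqP // | /eqP /x_neq0].
Qed.

End WeightVectors.

Lemma sl2_lowering_nilpotent (K : numFieldType) (V : vectType K) (E F H : 'End(V))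
    (w : V) (m : nat) :
  (forall u, E (F u) - F (E u) = H u) ->
  (forall u, H (F u) - F (H u) = - (F u *+ 2)) ->
  E w = 0 -> H w = m%:R *: w -> iter m.+1 F w = 0.
Proof.
(* The [x k] have distinct [H]-weights [m - 2k], so one of them vanishes; at the first
   one, [E_x] forces [k = m + 1]. *)
move=> EF_comm HF_comm E_w H_w; pose x k := iter k F w.
have H_x k : H (x k) = (m%:R - (k.*2)%:R) *: x k.
  elim: k => [|k IH]; first by rewrite subr0 H_w.
  have /eqP := HF_comm (x k); rewrite IH linearZ subr_eq => /eqP /= ->.
  rewrite -scaler_nat -scaleNr -scalerDl doubleS -addn2 -addnn !natrD.
  by congr (_ *: _); ring.
have E_x k : E (x k.+1) = (k.+1%:R * (m%:R - k%:R)) *: x k.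
  elim: k => [|k IH].
    by have := EF_comm w; rewrite E_w linear0 subr0 /= => ->; rewrite H_w mul1r subr0.
  have /eqP := EF_comm (x k.+1); rewrite subr_eq => /eqP /= ->.
  rewrite -/(x k.+1) IH linearZ /= (H_x k.+1) -scalerDl doubleS -addnn !mulrS natrD.
  by congr (_ *: _); ring.
have [k xk0] : exists k, x k = 0.
  apply: (weight_vectors_eq0 (P := fun _ : unit => True) (A := fun _ => H)
    (mu := fun k _ => m%:R - (k.*2)%:R)) => [k [] _ | k l kl]; first exact: H_x.
  exists tt => //; rewrite (inj_eq (addrI _)) (inj_eq oppr_inj) eqr_nat.
  by rewrite (inj_eq double_inj).
have [[|k'] /eqP xk0' kmin] := ex_minnP (ex_intro (fun k => x k == 0) k (introT eqP xk0)).
  by rewrite -[w]/(x 0) xk0'; elim: m.+1 => //= j ->; rewrite linear0.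
have xk'_neq0 : x k' != 0 by apply/negP => /kmin; rewrite ltnn.
have /eqP := E_x k'; rewrite xk0' linear0 eq_sym scaler_eq0 (negbTE xk'_neq0) orbF.
by rewrite mulf_eq0 pnatr_eq0 subr_eq0 eqr_nat /= => /eqP mk; rewrite -/(x m.+1) mk.
Qed.

Lemma vspace_of_pred (K : fieldType) (V : vectType K) (P : V -> Prop) :
  P 0 -> (forall a u w, P u -> P w -> P (a *: u + w)) ->
  exists U : {vspace V}, forall u, u \in U <-> P u.
Proof.
move=> P0 Plin.
suff grow (U : {vspace V}) : (forall u, u \in U -> P u) ->
    exists U' : {vspace V}, forall u, u \in U' <-> P u.
  by apply: (grow 0%VS) => u; rewrite memv0 => /eqP ->.
have [N] := ubnP (\dim (fullv : {vspace V}) - \dim U).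
elim: N U => // N IH U deficitU UP.
have [[u Pu uU] | closed] := classic (exists2 u, P u & u \notin U); last first.
  exists U => u; split; first exact: UP.
  by move=> Pu; apply/negPn/negP => uU; apply: closed; exists u.
have sUU' : (U <= U + <[u]>)%VS by exact: addvSl.
apply: (IH (U + <[u]>)%VS).
  have ltUU' : (\dim U < \dim (U + <[u]>))%N.
    rewrite ltn_neqAle (dimvS sUU') (dimv_leqif_eq sUU').2 andbT.
    by apply: contraNneq uU => ->; apply: subvP (addvSr U _) _ (memv_line u).
  rewrite -ltnS; apply: leq_trans deficitU; rewrite ltnS ltn_sub2l //.
  exact: leq_trans ltUU' (dimvS (subvf _)).
move=> y /memv_addP[a aU [b /vlineP[c ->] ->]].
by rewrite addrC; apply: Plin => //; apply: UP.
Qed.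

Lemma mxtrace_delta (R : pzSemiRingType) n (a b : 'I_n) :
  \tr (delta_mx a b : 'M[R]_n) = (a == b)%:R.
Proof.
rewrite /mxtrace (bigD1 a) //= big1 ?addr0 => [|k ka]; first by rewrite mxE eqxx.
by rewrite mxE (negbTE ka).
Qed.

Lemma mxtrace_commutator (R : comPzRingType) n (X Y : 'M[R]_n) :
  \tr (X *m Y - Y *m X) = 0.
Proof. by rewrite raddfB /= mxtrace_mulC subrr. Qed.

Lemma diagonal_commutator_delta (R : comPzRingType) n (D : 'M[R]_n) (a b : 'I_n) :
  diagonal D -> D *m delta_mx a b - delta_mx a b *m D = (D a a - D b b) *: delta_mx a b.
Proof.
move=> Ddiag; have -> : D = diag_mx (\row_i D i i).
  apply/matrixP => i j; rewrite !mxE; case: eqVneq => [-> //|ij].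
  by rewrite Ddiag ?mulr0n.
rewrite mul_diag_mx mul_mx_diag; apply/matrixP => i j; rewrite !mxE.
by case: eqVneq => [->|]; case: eqVneq => [->|] => *;
  rewrite ?mulr1 ?mul1r ?mulr0 ?mul0r ?subrr ?eqxx.
Qed.

Section Roots.
Context {K : numClosedFieldType} {n : nat}.

Local Notation root := ('I_n * 'I_n * {poly K})%type.

(* [((i, j), p)] with [i < j] stands for [f_alpha (x) p], [alpha = eps_i - eps_j]. *)
Definition root_mx (t : root) : 'M[{poly K}]_n := t.2 *: delta_mx t.1.2 t.1.1.
Definition positive_root (t : root) := (t.1.1 < t.1.2)%N.
Definition root_val (t : root) (h : 'M[K]_n) : K := h t.1.1 t.1.1 - h t.1.2 t.1.2.

Lemma mxtrace_root_mx t : positive_root t -> \tr (root_mx t) = 0.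
Proof. by move=> tpos; rewrite mxtraceZ mxtrace_delta -val_eqE gtn_eqF ?mulr0. Qed.

Lemma commutator_cartan_root_mx (h : 'M[K]_n) t : diagonal h ->
  map_mx polyC h *m root_mx t - root_mx t *m map_mx polyC h
  = (- root_val t h)%:P *: root_mx t.
Proof.
move=> hdiag; rewrite /root_mx -scalemxAr -scalemxAl -scalerBr.
rewrite diagonal_commutator_delta; last by move=> i j ij; rewrite mxE hdiag ?polyC0.
by rewrite scalerA mulrC -scalerA !mxE -polyCB opprB.
Qed.

Definition coroot (i j : 'I_n) : 'M[K]_n := delta_mx i i - delta_mx j j.

Lemma coroot_cartan i j : cartan (coroot i j).
Proof.
split; last by rewrite raddfB /= !mxtrace_delta !eqxx subrr.
move=> r c rc; have off a : ((r == a) && (c == a)) = false.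
  by apply/negP => /andP[/eqP ra /eqP ca]; rewrite ra ca eqxx in rc.
by rewrite !mxE !off subrr.
Qed.

Lemma wt_ev_coroot (tau : 'I_n -> nat) i j :
  wt_ev tau (coroot i j) = (tau i)%:R - (tau j)%:R.
Proof.
have pick (a : 'I_n) : \sum_(k < n) (tau k)%:R * (a == k)%:R = (tau a)%:R :> K.
  rewrite (bigD1 a) //= big1 ?addr0 ?eqxx ?mulr1 // => k ka.
  by rewrite eq_sym (negbTE ka) mulr0.
rewrite /wt_ev -(pick i) -(pick j) -sumrB; apply: eq_bigr => k _.
by rewrite !mxE !andbb mulrBr [i == k]eq_sym [j == k]eq_sym.
Qed.

Definition lowered_weight (lam : 'M[K]_n -> K) (s : seq root) (h : 'M[K]_n) : K :=
  lam h - \sum_(t <- s) root_val t h.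

(* diag(n-1, n-3, ..., 1-n): every positive root is a positive integer on it. *)
Definition hrho : 'M[K]_n := \matrix_(i, j) ((i == j)%:R * ((n.-1 - i)%:R - (i : nat)%:R)).

Lemma hrho_cartan : cartan hrho.
Proof.
split; first by move=> i j ij; rewrite mxE (negbTE ij) mul0r.
rewrite /mxtrace; under eq_bigr do rewrite mxE eqxx mul1r.
rewrite sumrB; apply/eqP; rewrite subr_eq0; apply/eqP.
rewrite (reindex_inj rev_ord_inj) /=; apply: eq_bigr => i _; congr (_%:R).
have := ltn_ord i; lia.
Qed.

Lemma root_val_hrho t : positive_root t -> root_val t hrho = ((t.1.2 - t.1.1).*2)%:R.
Proof.
rewrite /positive_root /root_val !mxE !eqxx !mul1r => ij.
have le1 : (t.1.1 <= n.-1)%N by have := ltn_ord t.1.2; lia.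
have le2 : (t.1.2 <= n.-1)%N by have := ltn_ord t.1.2; lia.
by rewrite -mul2n natrM !natrB ?(ltnW ij) //; ring.
Qed.

Lemma sum_root_val_hrho_neq0 (s : seq root) :
  all positive_root s -> s != [::] -> \sum_(t <- s) root_val t hrho != 0.
Proof.
move=> spos s_neq0; rewrite big_seq (eq_bigr _ (fun t ts => root_val_hrho (allP spos t ts))).
rewrite -big_seq -natr_sum pnatr_eq0 -lt0n.
case: s spos s_neq0 => // t s /andP[tpos _] _; rewrite big_cons.
by move: tpos; rewrite /positive_root; lia.
Qed.

Lemma lowered_weight_hrho lam s : all positive_root s -> s != [::] ->
  lowered_weight lam s hrho != lam hrho.
Proof.
move=> spos s_neq0; rewrite /lowered_weight -subr_eq0 addrAC subrr add0r oppr_eq0.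
exact: sum_root_val_hrho_neq0.
Qed.

Lemma sum_ord_succ (F : nat -> K) (i : nat) :
  \sum_(j < n | j == i.+1 :> nat) F j = if (i.+1 < n)%N then F i.+1 else 0.
Proof.
case: ltnP => [lt_in | le_ni].
  by rewrite (big_pred1 (Ordinal lt_in)) // => j; rewrite -val_eqE.
by rewrite big_pred0 // => j; apply: contraTF (ltn_ord j) => /eqP ->; rewrite -leqNgt.
Qed.

Lemma sub_diag_simple_roots (h : 'M[K]_n) (a b : 'I_n) : (a < b)%N ->
  h a a - h b b = \sum_(i < n) \sum_(j < n | j == i.+1 :> nat)
                    ((a <= i)%N && (i < b)%N)%:R * (h i i - h j j).
Proof.
move=> ab; pose d k := if insub k is Some j then h j j else 0 : K.
have dE (i : 'I_n) : d i = h i i by rewrite /d valK.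
pose G i := ((a <= i)%N && (i < b)%N)%:R * (d i - d i.+1).
have -> : h a a - h b b = \sum_(0 <= i < n) G i.
  have le_an : (a <= n)%N by have := ltn_ord b; lia.
  rewrite (big_cat_nat (leq0n a) le_an) (big_cat_nat (ltnW ab) (ltnW (ltn_ord b))) /=.
  rewrite big_nat_cond big1 => [|i /andP[/andP[_ ia] _]]; last by rewrite /G leqNgt ia mul0r.
  rewrite add0r addrC big_nat_cond big1 => [|i /andP[/andP[bi _] _]]; last first.
    by rewrite /G ltnNge bi andbF mul0r.
  rewrite add0r big_nat_cond.
  under eq_bigr => i /andP[/andP[ai ib] _] do rewrite /G ai ib mul1r -opprB.
  by rewrite -big_nat_cond sumrN telescope_sumr ?(ltnW ab) // opprB !dE.
rewrite big_mkord; apply: eq_bigr => i _.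
under eq_bigr => j _ do rewrite -[h j j]dE -[h i i]dE.
rewrite (sum_ord_succ (fun k => ((a <= i)%N && (i < b)%N)%:R * (d i - d k))).
case: ltnP => // le_ni.
have bi : (b <= i)%N by have := ltn_ord b; lia.
by rewrite /G [(i < b)%N]ltnNge bi andbF mul0r.
Qed.

Lemma wt_le_of_root_sum (mu tau : 'I_n -> nat) (s : seq root) :
  all positive_root s ->
  (forall h, cartan h -> wt_ev mu h - wt_ev tau h = \sum_(t <- s) root_val t h) ->
  wt_le K tau mu.
Proof.
move=> spos Hs; exists (fun i => \sum_(t <- s) ((t.1.1 <= i)%N && (i < t.1.2)%N))%N.
move=> h hcartan; rewrite Hs // big_seq.
under eq_bigr => t ts do rewrite /root_val (sub_diag_simple_roots h (allP spos t ts)).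
rewrite -big_seq exchange_big; apply: eq_bigr => i _; rewrite exchange_big.
by apply: eq_bigr => j _; rewrite natr_sum mulr_suml.
Qed.

Definition ev0 (X : 'M[{poly K}]_n) : 'M[K]_n := map_mx (horner_eval 0) X.

Lemma ev0E X i j : ev0 X i j = (X i j)`_0.
Proof. by rewrite mxE horner_evalE horner_coef0. Qed.

Lemma ev0_polyC (h : 'M[K]_n) : ev0 (map_mx polyC h) = h.
Proof. by apply/matrixP => i j; rewrite ev0E mxE coefC. Qed.

Lemma mxtrace_ev0 X : \tr (ev0 X) = (\tr X)`_0.
Proof. by rewrite /ev0 trace_map_mx; exact: horner_coef0. Qed.

Lemma ev0_delta i j : ev0 (delta_mx i j) = delta_mx i j.
Proof. by apply/matrixP => r c; rewrite ev0E !mxE coefMn coef1. Qed.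

Lemma ev0_linear a X Y : ev0 (a%:P *: X + Y) = a *: ev0 X + ev0 Y.
Proof. by apply/matrixP => i j; rewrite !(ev0E, mxE) coefD coefCM. Qed.

Lemma ev0_commutator X Y : ev0 (X *m Y - Y *m X) = ev0 X *m ev0 Y - ev0 Y *m ev0 X.
Proof. by rewrite /ev0 map_mxB !map_mxM. Qed.

End Roots.

Section CurrentModule.
Variables (K : numClosedFieldType) (n : nat) (M : vectType K).
Variable rho : 'M[{poly K}]_n -> 'End(M).
Hypothesis rho_rep : cur_rep rho.

Lemma cur_repB : {morph rho : X Y / X - Y}.
Proof.
by move=> X Y; rewrite addrC -scaleN1r -polyCN rho_rep.1 scaleN1r addrC.
Qed.
HB.instance Definition _ := GRing.isZmodMorphism.Build _ _ rho cur_repB.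

Lemma cur_repZ a X : rho (a%:P *: X) = a *: rho X.
Proof. by rewrite -[_ *: X]addr0 rho_rep.1 raddf0 addr0. Qed.

Lemma cur_rep_commutator X Y u : \tr X = 0 -> \tr Y = 0 ->
  rho X (rho Y u) = rho (X *m Y - Y *m X) u + rho Y (rho X u).
Proof. by move=> trX trY; rewrite rho_rep.2 // subrK. Qed.

Local Notation root := ('I_n * 'I_n * {poly K})%type.

Variable v : M.

Definition monomial (s : seq root) : M := foldr (fun t u => rho (root_mx t) u) v s.

Definition in_monomial_span (u : M) := exists2 ss : seq (K * seq root),
  all (fun x => all positive_root x.2) ss & u = \sum_(x <- ss) x.1 *: monomial x.2.

Lemma in_monomial_span0 : in_monomial_span 0.
Proof. by exists [::]; rewrite ?big_nil. Qed.

Lemma in_monomial_spanD u w :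
  in_monomial_span u -> in_monomial_span w -> in_monomial_span (u + w).
Proof.
by move=> [s1 s1pos ->] [s2 s2pos ->]; exists (s1 ++ s2); rewrite ?all_cat ?s1pos ?big_cat.
Qed.

Lemma in_monomial_spanZ c u : in_monomial_span u -> in_monomial_span (c *: u).
Proof.
move=> [s spos ->]; exists [seq (c * x.1, x.2) | x <- s]; first by rewrite all_map.
by rewrite big_map scaler_sumr; apply: eq_bigr => x _; rewrite scalerA.
Qed.

Lemma in_monomial_span_sum I (r : seq I) (P : pred I) (F : I -> M) :
  (forall i, P i -> in_monomial_span (F i)) ->
  in_monomial_span (\sum_(i <- r | P i) F i).
Proof.
by move=> FP; apply: big_ind => //; [exact: in_monomial_span0 | exact: in_monomial_spanD].
Qed.

Lemma monomial_in_span s : all positive_root s -> in_monomial_span (monomial s).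
Proof. by move=> spos; exists [:: (1, s)]; rewrite /= ?spos ?big_seq1 ?scale1r. Qed.

Lemma root_mx_in_span t u : positive_root t ->
  in_monomial_span u -> in_monomial_span (rho (root_mx t) u).
Proof.
move=> tpos [s spos ->]; exists [seq (x.1, t :: x.2) | x <- s].
  by rewrite all_map; apply: sub_all spos => x /= ->; rewrite tpos.
by rewrite big_map linear_sum; apply: eq_bigr => x _; rewrite linearZ.
Qed.

Variable lam : 'M[K]_n -> K.
Hypothesis rho_upper : forall X : 'M[{poly K}]_n, strict_upper X -> rho X v = 0.
Hypothesis rho_cartan_t : forall X : 'M[{poly K}]_n, diagonal X -> \tr X = 0 ->
  (forall i, (X i i)`_0 = 0) -> rho X v = 0.
Hypothesis rho_cartan : forall h : 'M[K]_n, cartan h -> rho (map_mx polyC h) v = lam h *: v.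

Lemma mxtrace_cartan (h : 'M[K]_n) : cartan h -> \tr (map_mx polyC h) = 0.
Proof. by move=> hcartan; rewrite trace_map_mx hcartan.2. Qed.

Lemma monomial_weight s : all positive_root s ->
  weight_vector (@cartan K n) (fun h => rho (map_mx polyC h))
    (lowered_weight lam s) (monomial s).
Proof.
elim: s => [_ h /rho_cartan| t s IH /andP[tpos spos] h hcartan] /=.
  by rewrite /lowered_weight big_nil subr0.
rewrite cur_rep_commutator ?mxtrace_cartan ?mxtrace_root_mx //.
rewrite (commutator_cartan_root_mx _ hcartan.1) cur_repZ IH // linearZ /=.
by rewrite scale_lfunE -scalerDl /lowered_weight big_cons; congr (_ *: _); ring.
Qed.

Lemma rho_diagonal_in_span X : diagonal X -> \tr X = 0 -> in_monomial_span (rho X v).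
Proof.
move=> Xdiag trX; have ev0_cartan : cartan (ev0 X).
  split; first by move=> i j ij; rewrite ev0E (Xdiag i j ij) coef0.
  by rewrite mxtrace_ev0 trX coef0.
rewrite -(subrK (map_mx polyC (ev0 X)) X) raddfD add_lfunE rho_cartan // rho_cartan_t ?add0r.
- exact/in_monomial_spanZ/(monomial_in_span (s := [::])).
- by move=> i j ij; rewrite !mxE (Xdiag i j ij) horner_evalE horner0 subrr.
- by rewrite raddfB /= mxtrace_cartan // trX subr0.
- by move=> i; rewrite !mxE coefB coefC horner_evalE horner_coef0 subrr.
Qed.

Lemma rho_v_in_span X : \tr X = 0 -> in_monomial_span (rho X v).
Proof.
move=> trX.
pose Up : 'M_n := \matrix_(i, j) (if (i < j)%N then X i j else 0).
pose Dg : 'M_n := \matrix_(i, j) (if i == j then X i j else 0).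
pose Lo : 'M_n := \matrix_(i, j) (if (j < i)%N then X i j else 0).
have -> : X = Up + Dg + Lo.
  apply/matrixP => i j; rewrite !mxE.
  have [->|ij] := eqVneq i j; first by rewrite ltnn addr0 add0r.
  case: ltngtP => [_|_|/val_inj eq_ij].
  - by rewrite !addr0.
  - by rewrite !add0r.
  - by rewrite eq_ij eqxx in ij.
rewrite !raddfD !add_lfunE; apply: in_monomial_spanD; first apply: in_monomial_spanD.
- rewrite rho_upper; first exact: in_monomial_span0.
  by move=> i j ij; rewrite mxE (negbTE ij).
- apply: rho_diagonal_in_span; first by move=> i j ij; rewrite mxE (negbTE ij).
  by rewrite -trX; apply: eq_bigr => i _; rewrite mxE eqxx.
- rewrite [Lo]matrix_sum_delta raddf_sum sum_lfunE; apply: in_monomial_span_sum => i _.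
  rewrite raddf_sum sum_lfunE; apply: in_monomial_span_sum => j _.
  rewrite mxE; case: ltnP => [ji|_].
    by apply: (monomial_in_span (s := [:: (j, i, X i j)])); rewrite /= /positive_root ji.
  by rewrite scale0r raddf0 zero_lfunE; exact: in_monomial_span0.
Qed.

Lemma rho_in_span X u : \tr X = 0 -> in_monomial_span u -> in_monomial_span (rho X u).
Proof.
have rho_monomial s : all positive_root s -> forall Y, \tr Y = 0 ->
    in_monomial_span (rho Y (monomial s)).
  elim: s => [_|t s IH /andP[tpos spos]] Y trY; first exact: rho_v_in_span.
  rewrite /= cur_rep_commutator ?mxtrace_root_mx //; apply: in_monomial_spanD.
    exact/IH/mxtrace_commutator.
  exact/root_mx_in_span/IH.
move=> trX [ss sspos ->]; rewrite linear_sum big_seq.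
apply: in_monomial_span_sum => x xss; rewrite linearZ.
by apply/in_monomial_spanZ/rho_monomial => //; exact: (allP sspos).
Qed.

Lemma monomial_span_full :
  (forall U : {vspace M}, v \in U ->
     (forall X, \tr X = 0 -> forall u, u \in U -> rho X u \in U) -> U = fullv) ->
  forall u, in_monomial_span u.
Proof.
have [U memU] := vspace_of_pred in_monomial_span0
  (fun a u w Su Sw => in_monomial_spanD (in_monomial_spanZ a Su) Sw).
move=> generated u; apply/memU; rewrite (generated U) ?memvf //.
  exact/memU/(monomial_in_span (s := [::])).
by move=> X trX w /memU Sw; apply/memU/rho_in_span.
Qed.

End CurrentModule.

Section SlModule.
Variables (K : numClosedFieldType) (n : nat) (V : vectType K).
Variable sigma : 'M[K]_n -> 'End(V).
Hypothesis sigma_rep : sl_rep sigma.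

HB.instance Definition _ :=
  GRing.isLinear.Build K 'M[K]_n 'End(V) *:%R sigma (fun a => sigma_rep.1 a).

Definition ev0_rep (X : 'M[{poly K}]_n) : 'End(V) := sigma (ev0 X).

Lemma ev0_rep_cur : cur_rep ev0_rep.
Proof.
split=> [a X Y | X Y trX trY u]; first by rewrite /ev0_rep ev0_linear sigma_rep.1.
by rewrite /ev0_rep ev0_commutator sigma_rep.2 // mxtrace_ev0 ?trX ?trY coef0.
Qed.

Lemma ev0_rep_polyC (x : 'M[K]_n) : ev0_rep (map_mx polyC x) = sigma x.
Proof. by rewrite /ev0_rep ev0_polyC. Qed.

Lemma ev0_rep_eq0 X : ev0 X = 0 -> ev0_rep X = 0.
Proof. by rewrite /ev0_rep => ->; exact: linear0. Qed.

Lemma sl_rep_lowering_nilpotent (tau : 'I_n -> nat) (w : V) (i j : 'I_n) :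
  (i < j)%N -> (tau j <= tau i)%N ->
  (forall x : 'M[K]_n, strict_upper x -> sigma x w = 0) ->
  (forall h : 'M[K]_n, cartan h -> sigma h w = wt_ev tau h *: w) ->
  iter (tau i - tau j).+1 (sigma (delta_mx j i)) w = 0.
Proof.
move=> ij tji w_upper w_cartan; have ne : i != j by rewrite -val_eqE ltn_eqF.
have trij : \tr (delta_mx i j : 'M[K]_n) = 0 by rewrite mxtrace_delta (negbTE ne).
have trji : \tr (delta_mx j i : 'M[K]_n) = 0 by rewrite mxtrace_delta eq_sym (negbTE ne).
apply: (sl2_lowering_nilpotent (E := sigma (delta_mx i j)) (H := sigma (coroot i j))).
- by move=> u; rewrite -(sigma_rep.2 _ _ trij trji) !mul_delta_mx.
- move=> u; rewrite -(sigma_rep.2 _ _ (coroot_cartan i j).2 trji).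
  rewrite mulmxBl mulmxBr !mul_delta_mx_cond !eqxx (negbTE ne).
  rewrite !mulr0n !mulr1n sub0r subr0 -opprD -mulr2n linearN linearMn /=.
  by rewrite opp_lfunE !mulr2n add_lfunE.
- apply: w_upper => r c rc; rewrite mxE; apply/eqP; rewrite pnatr_eq0 eqb0.
  by apply: contra rc => /andP[/eqP -> /eqP ->].
- by rewrite w_cartan ?wt_ev_coroot ?natrB //; exact: coroot_cartan.
Qed.

Lemma ev0_rep_upper (w : V) : (forall x : 'M[K]_n, strict_upper x -> sigma x w = 0) ->
  forall X : 'M[{poly K}]_n, strict_upper X -> ev0_rep X w = 0.
Proof. by move=> w_upper X Xup; apply: w_upper => i j ij; rewrite ev0E (Xup i j ij) coef0. Qed.

Lemma ev0_rep_cartan_t (X : 'M[{poly K}]_n) :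
  diagonal X -> (forall i, (X i i)`_0 = 0) -> ev0_rep X = 0.
Proof.
move=> Xdiag X0; apply: ev0_rep_eq0; apply/matrixP => i j; rewrite ev0E mxE.
by case: (eqVneq i j) => [-> | ij]; rewrite ?X0 ?(Xdiag i j ij) ?coef0.
Qed.

Lemma ev0_rep_F_rel (mu1 mu2 : 'I_n -> nat) (w : V) :
  dominant mu1 -> dominant mu2 ->
  (forall x : 'M[K]_n, strict_upper x -> sigma x w = 0) ->
  (forall h : 'M[K]_n, cartan h -> sigma h w = wt_ev (wt_add mu1 mu2) h *: w) ->
  F_rel mu1 mu2 ev0_rep w.
Proof.
move=> d1 d2 w_upper w_cartan; split; first exact: ev0_rep_upper.
split; first by move=> X Xdiag _ X0; rewrite ev0_rep_cartan_t // zero_lfunE.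
split.
  move=> X _ Xlow; rewrite ev0_rep_eq0 ?zero_lfunE //.
  by apply/matrixP => i j; rewrite ev0E mxE Xlow.
split; first by move=> h hc; rewrite ev0_rep_polyC w_cartan.
split.
  move=> i j ij; rewrite /ev0_rep ev0_delta; apply: sl_rep_lowering_nilpotent => //.
  by rewrite leq_add // ?d1 ?d2 // ltnW.
move=> i j _; rewrite ev0_rep_eq0; last by apply/matrixP => r c; rewrite ev0E !mxE coefXM.
by rewrite iterS zero_lfunE.
Qed.

Lemma sl_hom_lin (M : vectType K) (rho : 'M[{poly K}]_n -> 'End(M)) (a : K)
    (f g : 'Hom(M, V)) :
  sl_hom rho sigma f -> sl_hom rho sigma g -> sl_hom rho sigma (a *: f + g).
Proof.
by move=> fhom ghom x trx u; rewrite !add_lfunE !scale_lfunE fhom // ghom // linearD linearZ.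
Qed.

Lemma sl_hom_weight_vector (M : vectType K) (rho : 'M[{poly K}]_n -> 'End(M))
    (g : 'Hom(M, V)) (mu : 'M[K]_n -> K) (u : M) :
  sl_hom rho sigma g ->
  weight_vector (@cartan K n) (fun h => rho (map_mx polyC h)) mu u ->
  weight_vector (@cartan K n) sigma mu (g u).
Proof. by move=> ghom uwt h hcartan; rewrite -ghom ?hcartan.2 // uwt // linearZ. Qed.

Section SimpleModule.
Hypothesis sigma_irr : forall U : {vspace V},
  (forall x, \tr x = 0 -> forall u, u \in U -> sigma x u \in U) -> U = 0%VS \/ U = fullv.
Variables (tau : 'I_n -> nat) (w : V).
Hypothesis w_neq0 : w != 0.
Hypothesis w_upper : forall x : 'M[K]_n, strict_upper x -> sigma x w = 0.
Hypothesis w_cartan : forall h : 'M[K]_n, cartan h -> sigma h w = wt_ev tau h *: w.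

Lemma ev0_rep_monomial_weight s : all positive_root s ->
  weight_vector (@cartan K n) sigma (lowered_weight (wt_ev tau) s) (monomial ev0_rep w s).
Proof.
move=> spos h hcartan; rewrite -ev0_rep_polyC; apply: (monomial_weight ev0_rep_cur) => //.
by move=> x hx; rewrite ev0_rep_polyC w_cartan.
Qed.

Lemma simple_monomial_span y : in_monomial_span ev0_rep w y.
Proof.
apply: (monomial_span_full ev0_rep_cur (lam := wt_ev tau)).
- exact: ev0_rep_upper.
- by move=> X Xdiag _ X0; rewrite ev0_rep_cartan_t // zero_lfunE.
- by move=> h hc; rewrite ev0_rep_polyC w_cartan.
- move=> U wU Uinv; case: (sigma_irr (U := U)) => // [x trx u uU | U0].
    by rewrite -ev0_rep_polyC Uinv // trace_map_mx trx.
  by move: wU; rewrite U0 memv0 (negbTE w_neq0).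
Qed.

Lemma highest_weight_line y :
  weight_vector (@cartan K n) sigma (wt_ev tau) y -> exists c, y = c *: w.
Proof.
move=> ywt; have [ss sspos ey] := simple_monomial_span y.
exists (\sum_(x <- ss) if x.2 == [::] then x.1 else 0); apply/eqP; rewrite -subr_eq0; apply/eqP.
pose z x := if x.2 == [::] then 0 else x.1 *: monomial ev0_rep w x.2.
apply: (weight_sum_eq0 (P := @cartan K n) (A := sigma) (tau := wt_ev tau) (r := ss) (y := z)
         (mu := fun x => lowered_weight (wt_ev tau) x.2)).
- by rewrite -scaleNr; apply: weight_vectorD => //; apply: weight_vectorZ.
- move=> x xss; rewrite /z; case: ifP => _; first exact: weight_vector0.
  exact/weight_vectorZ/ev0_rep_monomial_weight/(allP sspos).
- move=> x xss; rewrite /z; case: ifP => [_ | x2_nil _]; first by rewrite eqxx.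
  exists hrho; first exact: hrho_cartan.
  by apply: lowered_weight_hrho; [exact: (allP sspos) | rewrite x2_nil].
- rewrite ey scaler_suml -sumrB; apply: eq_bigr => x _; rewrite /z.
  by case: ifP => [/eqP -> | _]; rewrite ?subrr // scale0r subr0.
Qed.

Lemma sl_hom_eq0 (M : vectType K) (rho : 'M[{poly K}]_n -> 'End(M)) (v : M)
    (lam : 'M[K]_n -> K) (g : 'Hom(M, V)) :
  cur_rep rho ->
  (forall h : 'M[K]_n, cartan h -> rho (map_mx polyC h) v = lam h *: v) ->
  (forall u, in_monomial_span rho v u) -> sl_hom rho sigma g ->
  (forall s, all positive_root s -> g (monomial rho v s) != 0 ->
     exists2 h, cartan h & lowered_weight lam s h != wt_ev tau h) ->
  g = 0.
Proof.
move=> rho_rep rho_cartan span ghom gsep.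
have [// | g_neq0] := eqVneq g 0; exfalso; move/eqP: w_neq0; apply.
have img_inv x : \tr x = 0 -> forall u, u \in limg g -> sigma x u \in limg g.
  by move=> trx _ /memv_imgP[m _ ->]; rewrite -ghom ?memv_img ?memvf.
have [img0 | imgT] := sigma_irr img_inv.
  suff g0 : g = 0 by rewrite g0 eqxx in g_neq0.
  apply/lfunP => u; apply/eqP.
  by rewrite zero_lfunE -memv0 -img0 memv_img ?memvf.
have /memv_imgP[m _ wm] : w \in limg g by rewrite imgT memvf.
have [ss sspos em] := span m.
apply: (weight_sum_eq0 (P := @cartan K n) (A := sigma) (tau := wt_ev tau) (r := ss)
          (y := fun x => x.1 *: g (monomial rho v x.2))
          (mu := fun x => lowered_weight lam x.2)) => [//|x xss|x xss|].
- exact/weight_vectorZ/sl_hom_weight_vector/(monomial_weight rho_rep rho_cartan)/(allP sspos).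
- by rewrite scaler_eq0 negb_or => /andP[_]; apply: gsep; apply: (allP sspos).
- by rewrite wm em linear_sum; apply: eq_bigr => x _; rewrite linearZ.
Qed.

End SimpleModule.

End SlModule.

Section HomFromF.
Variables (K : numClosedFieldType) (n : nat) (mu1 mu2 : 'I_n -> nat).
Variables (M : vectType K) (rho : 'M[{poly K}]_n -> 'End(M)) (v : M).
Hypothesis Fv : is_F mu1 mu2 rho v.

Lemma F_cartan (h : 'M[K]_n) : cartan h ->
  rho (map_mx polyC h) v = wt_ev (wt_add mu1 mu2) h *: v.
Proof. by have [_ [[_ [_ [_ [rho_cartan _]]]] _]] := Fv; exact: rho_cartan. Qed.

Lemma F_monomial_span u : in_monomial_span rho v u.
Proof.
have [rho_rep [[rho_upper [rho_cartan_t _]] [generated _]]] := Fv.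
exact: (monomial_span_full rho_rep rho_upper rho_cartan_t F_cartan).
Qed.

Lemma F_hom_dim_top (V : vectType K) (sigma : 'M[K]_n -> 'End(V)) :
  dominant mu1 -> dominant mu2 -> simple_hw (wt_add mu1 mu2) sigma -> hom_dim_is rho sigma 1.
Proof.
move=> d1 d2 [sigma_rep [_ [sigma_irr [w [w_neq0 [w_upper w_cartan]]]]]].
have [rho_rep [_ [_ univ]]] := Fv.
have [f0 [f0v f0hom]] := univ V (ev0_rep sigma) w (ev0_rep_cur sigma_rep)
  (ev0_rep_F_rel sigma_rep d1 d2 w_upper w_cartan).
have f0_sl : sl_hom rho sigma f0.
  by move=> x trx u; rewrite f0hom ?ev0_rep_polyC // trace_map_mx trx.
have f0_neq0 : f0 != 0 by apply: contraNneq w_neq0 => f00; rewrite -f0v f00 lfunE.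
exists <[f0]>%VS; split; last by rewrite dim_vline f0_neq0.
move=> f; split=> [/vlineP[c ->] | fhom].
  by rewrite -[c *: f0]addr0; apply: sl_hom_lin => // x _ u; rewrite !lfunE linear0.
have [c fv] := highest_weight_line sigma_rep sigma_irr w_neq0 w_upper w_cartan
  (sl_hom_weight_vector fhom F_cartan).
apply/vlineP; exists c; apply/eqP; rewrite -subr_eq0; apply/eqP.
apply: (sl_hom_eq0 sigma_irr w_neq0 w_cartan rho_rep F_cartan F_monomial_span).
  by rewrite addrC -scaleNr; apply: sl_hom_lin.
case=> [_ | t s spos _].
  by rewrite /= add_lfunE opp_lfunE scale_lfunE fv f0v subrr eqxx.
exists hrho; first exact: hrho_cartan.
exact: lowered_weight_hrho.
Qed.

Lemma F_hom_dim_not_le (tau : 'I_n -> nat) (V : vectType K) (sigma : 'M[K]_n -> 'End(V)) :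
  ~ wt_le K tau (wt_add mu1 mu2) -> simple_hw tau sigma -> hom_dim_is rho sigma 0.
Proof.
move=> not_le [sigma_rep [_ [sigma_irr [w [w_neq0 [w_upper w_cartan]]]]]].
have [rho_rep _] := Fv.
exists 0%VS; split; last exact: dimv0.
move=> f; rewrite memv0; split=> [/eqP -> x _ u | fhom]; first by rewrite !lfunE linear0.
apply/eqP/(sl_hom_eq0 sigma_irr w_neq0 w_cartan rho_rep F_cartan F_monomial_span fhom).
move=> s spos _; apply: NNPP => no_sep; apply: not_le.
apply: (wt_le_of_root_sum spos) => h hcartan.
have : lowered_weight (wt_ev (wt_add mu1 mu2)) s h = wt_ev tau h.
  by apply/eqP/negPn/negP => neq; apply: no_sep; exists h.
by move=> <-; rewrite opprB addrC subrK.
Qed.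

End HomFromF.

Theorem corollary3p3 (K : numClosedFieldType) (n : nat) (hn : (1 < n)%N)
    (mu1 mu2 : 'I_n -> nat) (d1 : dominant mu1) (d2 : dominant mu2)
    (M : vectType K) (rho : 'M[{poly K}]_n -> 'End(M)) (v : M) :
  is_F mu1 mu2 rho v ->
  (forall (V : vectType K) (sigma : 'M[K]_n -> 'End(V)),
     simple_hw (wt_add mu1 mu2) sigma -> hom_dim_is rho sigma 1) /\
  (forall tau : 'I_n -> nat, dominant tau -> ~ wt_le K tau (wt_add mu1 mu2) ->
     forall (V : vectType K) (sigma : 'M[K]_n -> 'End(V)),
       simple_hw tau sigma -> hom_dim_is rho sigma 0).
Proof.
move=> Fv; split=> [V sigma Vsimple | tau _ not_le V sigma Vsimple].
  exact: (F_hom_dim_top Fv d1 d2 Vsimple).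
exact: (F_hom_dim_not_le Fv not_le Vsimple).
Qed.
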